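(* Let $L$ be a frame. For a class $\mathcal X$ of sublocales write $\mathrm{int}_{\mathcal X}(S)=\bigvee\{T\in\mathcal X\mid T\subseteq S\}$ (join in $\mathsf{Sl}(L)$). Then fit and $\mathrm{int}_{\mathcal X}$ restrict to mutually inverse order isomorphisms in each of the following cases: (1) $\{\mathrm{fit}(S)\mid S\in\mathcal S_b(L)\}\cong\{\mathrm{int}_{\mathcal S_{lc}(L)}(S)\mid S\in\mathcal S_o(L)\}$; (2) $\{\mathrm{fit}(S)\mid S\in\mathcal S_c(L)\}\cong\{\mathrm{int}_{\mathfrak c[L]}(S)\mid S\in\mathcal S_o(L)\}$; (3) $\{\mathrm{fit}(S)\mid S\in\mathcal S_k(L)\}\cong\{\mathrm{int}_{\mathcal S_{co}(L)}(S)\mid S\in\mathcal S_o(L)\}$; (4) $\{\mathrm{fit}(S)\mid S\in\mathcal S_{sp}(L)\}\cong\{\mathrm{int}_{\mathcal S_{op}(L)}(S)\mid S\in\mathcal S_o(L)\}=\{\mathsf{sp}(S)\mid S\in\mathcal S_o(L)\}$. In each case the isomorphism from right to left is $\mathrm{fit}$ and from left to right is the corresponding $\mathrm{int}_{\mathcal X}$; all posets are ordered by inclusion.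
   Context: A frame is a complete lattice $L$ with $(\bigvee A)\wedge b=\bigvee_{a\in A}(a\wedge b)$, Heyting implication $\to$. A sublocale is a subset closed under all meets with $a\to s\in S$ for $a\in L,s\in S$; sublocales form a coframe $\mathsf{Sl}(L)$ under inclusion with joins $\bigvee_i S_i=\{\bigwedge A\mid A\subseteq\bigcup_iS_i\}$. $\mathfrak o(a)=\{a\to b\mid b\in L\}$, $\mathfrak c(a)={\uparrow}a$, $\mathfrak c[L]=\{\mathfrak c(a)\mid a\in L\}$. $\mathrm{fit}(S)=\bigcap\{\mathfrak o(a)\mid S\subseteq\mathfrak o(a)\}$; $\mathcal S_o(L)$ is the set of fitted sublocales (intersections of open sublocales). $\mathcal S_{lc}(L)=\{\mathfrak c(x)\cap\mathfrak o(y)\mid x,y\in L\}$ (locally closed); $\mathcal S_b(L)$ is the set of joins of locally closed sublocales; $\mathcal S_c(L)$ the set of joins of closed sublocales. A sublocale $S$ is compact if $S\subseteq\bigvee_{a\in A}\mathfrak o(a)$ implies $S\subseteq\mathfrak o(a_1)\vee\dots\vee\mathfrak o(a_n)$ for finitely many $a_i\in A$; $\mathcal S_{co}(L)$ is the set of compact sublocales and $\mathcal S_k(L)$ the set of joins of them. For a prime $p$ ($p\ne1$, $x\wedge y\le p\Rightarrow x\le p$ or $y\le p$), $\mathfrak b(p)=\{p,1\}$; $\mathcal S_{op}(L)$ is the set of such one-point sublocales, $\mathcal S_{sp}(L)$ the set of their joins, and $\mathsf{sp}(S)=\bigvee\{\mathfrak b(p)\mid p\text{ prime},\ \mathfrak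 b(p)\subseteq S\}$. *)

From Stdlib Require Import List.

Set Implicit Arguments.

Record frame := Frame {
  car :> Type;
  le : car -> car -> Prop;
  le_refl : forall a, le a a;
  le_trans : forall a b c, le a b -> le b c -> le a c;
  le_antisym : forall a b, le a b -> le b a -> a = b;
  sup : (car -> Prop) -> car;
  sup_ub : forall (A : car -> Prop) a, A a -> le a (sup A);
  sup_least : forall (A : car -> Prop) b, (forall a, A a -> le a b) -> le (sup A) b;
  meet : car -> car -> car;
  meet_lb1 : forall a b, le (meet a b) a;
  meet_lb2 : forall a b, le (meet a b) b;
  meet_glb : forall a b c, le c a -> le c b -> le c (meet a b);
  meet_sup_distr : forall (A : car -> Prop) b,
    meet (sup A) b = sup (fun c => exists a, A a /\ c = meet a b);
  imp : car -> car -> car;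
  imp_adj : forall a b c, le c (imp a b) <-> le (meet c a) b
}.

Arguments le {f}.
Arguments sup {f}.
Arguments meet {f}.
Arguments imp {f}.

Section Sublocales.
Variable L : frame.

Definition subset (S T : L -> Prop) : Prop := forall x, S x -> T x.

Definition inf (A : L -> Prop) : L := sup (fun x => forall a, A a -> le x a).
Definition top : L := sup (fun _ => True).

Definition sublocale (S : L -> Prop) : Prop :=
  (forall A : L -> Prop, subset A S -> S (inf A)) /\
  (forall a s, S s -> S (imp a s)).

Definition joinSl (F : (L -> Prop) -> Prop) : L -> Prop :=
  fun x => exists A : L -> Prop,
    (forall a, A a -> exists S, F S /\ S a) /\ x = inf A.

Definition opens (a : L) : L -> Prop := fun x => exists b, x = imp a b.
Definition closed (a : L) : L -> Prop := fun x => le a x.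

Definition fit (S : L -> Prop) : L -> Prop :=
  fun x => forall a, subset S (opens a) -> opens a x.

Definition S_o (S : L -> Prop) : Prop :=
  exists A : L -> Prop, S = (fun x => forall a, A a -> opens a x).
Definition S_lc (S : L -> Prop) : Prop :=
  exists x y, S = (fun z => closed x z /\ opens y z).
Definition S_b (S : L -> Prop) : Prop :=
  exists F, (forall T, F T -> S_lc T) /\ S = joinSl F.
Definition c_L (S : L -> Prop) : Prop := exists a, S = closed a.
Definition S_c (S : L -> Prop) : Prop :=
  exists F, (forall T, F T -> c_L T) /\ S = joinSl F.

Definition compact (S : L -> Prop) : Prop :=
  sublocale S /\
  forall A : L -> Prop,
    subset S (joinSl (fun T => exists a, A a /\ T = opens a)) ->
    exists l : list L, (forall a, In a l -> A a) /\
      subset S (joinSl (fun T => exists a, In a l /\ T = opens a)).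
Definition S_co (S : L -> Prop) : Prop := compact S.
Definition S_k (S : L -> Prop) : Prop :=
  exists F, (forall T, F T -> S_co T) /\ S = joinSl F.

Definition prime (p : L) : Prop :=
  p <> top /\ forall x y, le (meet x y) p -> le x p \/ le y p.
Definition onept (p : L) : L -> Prop := fun x => x = p \/ x = top.
Definition S_op (S : L -> Prop) : Prop := exists p, prime p /\ S = onept p.
Definition S_sp (S : L -> Prop) : Prop :=
  exists F, (forall T, F T -> S_op T) /\ S = joinSl F.
Definition sp (S : L -> Prop) : L -> Prop :=
  joinSl (fun T => exists p, prime p /\ subset (onept p) S /\ T = onept p).

Definition int_X (X : (L -> Prop) -> Prop) (S : L -> Prop) : L -> Prop :=
  joinSl (fun T => X T /\ subset T S).

Definition fit_int_iso (Y X : (L -> Prop) -> Prop) : Prop :=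
  let A := fun U => exists S, Y S /\ U = fit S in
  let B := fun U => exists S, S_o S /\ U = int_X X S in
  (forall U, A U -> B (int_X X U)) /\
  (forall U, B U -> A (fit U)) /\
  (forall U, A U -> fit (int_X X U) = U) /\
  (forall U, B U -> int_X X (fit U) = U) /\
  (forall U V, A U -> A V -> subset U V -> subset (int_X X U) (int_X X V)) /\
  (forall U V, B U -> B V -> subset U V -> subset (fit U) (fit V)).

End Sublocales.

(* fit is a closure operator on sets of elements whose closed sets are exactly
   the fitted sublocales, while int_X is an interior operator whose values are
   joins of members of X.  Nothing else about X is used: a join S of members
   of X satisfies S <= int_X (fit S) <= fit S, and a fitted S satisfies
   int_X S <= fit (int_X S) <= S, so applying fit and int_X monotonically
   yields the two round-trip identities.  In case (4), int_X S and sp S are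
   joins of the same family of one-point sublocales. *)
From Stdlib Require Import FunctionalExtensionality PropExtensionality.

Set Implicit Arguments.
Unset Strict Implicit.

Arguments subset {L}. Arguments inf {L}. Arguments fit {L}. Arguments opens {L}.
Arguments joinSl {L}. Arguments int_X {L}. Arguments sp {L}. Arguments S_o {L}.

Section FitInt.
Variable L : frame.

Definition joins_of (X : (L -> Prop) -> Prop) (S : L -> Prop) : Prop :=
  exists F, (forall T, F T -> X T) /\ S = joinSl F.

Lemma subset_antisym (U V : L -> Prop) : subset U V -> subset V U -> U = V.
Proof.
  intros HUV HVU. apply functional_extensionality; intro x.
  apply propositional_extensionality; split; [apply HUV | apply HVU].
Qed.

Lemma subset_trans (U V W : L -> Prop) : subset U V -> subset V W -> subset U W.
Proof. intros HUV HVW x Hx. apply HVW, HUV, Hx. Qed.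

Lemma inf_lb (A : L -> Prop) y : A y -> le (inf A) y.
Proof. intro Hy. apply sup_least. intros a Ha. exact (Ha y Hy). Qed.

Lemma inf_glb (A : L -> Prop) z : (forall y, A y -> le z y) -> le z (inf A).
Proof. intro H. apply (sup_ub _ (fun x => forall a, A a -> le x a)). exact H. Qed.

Lemma inf_singleton (x : L) : inf (fun y => y = x) = x.
Proof.
  apply le_antisym.
  - apply inf_lb; reflexivity.
  - apply inf_glb. intros y ->. apply le_refl.
Qed.

Lemma imp_opens (a x : L) : opens a x -> imp a x = x.
Proof.
  intros [b ->]. apply le_antisym.
  - apply imp_adj.
    set (c := imp a (imp a b)).
    assert (Hc : le (meet c a) (imp a b)) by apply (imp_adj _ a (imp a b) c), le_refl.
    apply (le_trans _ _ (meet (meet c a) a)).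
    + apply meet_glb; [apply le_refl | apply meet_lb2].
    + apply imp_adj, Hc.
  - apply imp_adj, meet_lb1.
Qed.

Lemma opens_inf (A : L -> Prop) a : subset A (opens a) -> opens a (inf A).
Proof.
  intro HA. exists (inf A). apply le_antisym.
  - apply imp_adj, meet_lb1.
  - apply inf_glb. intros y Hy.
    rewrite <- (imp_opens (HA y Hy)).
    apply imp_adj, (le_trans _ _ (inf A)).
    + apply imp_adj, le_refl.
    + apply inf_lb, Hy.
Qed.

Lemma subset_fit (S : L -> Prop) : subset S (fit S).
Proof. intros x Hx a Ha. exact (Ha x Hx). Qed.

Lemma fit_mono (S S' : L -> Prop) : subset S S' -> subset (fit S) (fit S').
Proof. intros H x Hx a Ha. apply Hx. exact (subset_trans H Ha). Qed.

Lemma fit_idem (S : L -> Prop) : subset (fit (fit S)) (fit S).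
Proof. intros x Hx a Ha. apply Hx. intros y Hy. exact (Hy a Ha). Qed.

Lemma fit_inf (S A : L -> Prop) : subset A (fit S) -> fit S (inf A).
Proof. intros HA a Ha. apply opens_inf. intros y Hy. exact (HA y Hy a Ha). Qed.

Lemma fit_S_o (S : L -> Prop) : S_o S -> subset (fit S) S.
Proof. intros [A ->] x Hx a Ha. apply Hx. intros y Hy. exact (Hy a Ha). Qed.

Lemma S_o_fit (S : L -> Prop) : S_o (fit S).
Proof. exists (fun a => subset S (opens a)). reflexivity. Qed.

Lemma joinSl_mono (F G : (L -> Prop) -> Prop) :
  (forall T, F T -> G T) -> subset (joinSl F) (joinSl G).
Proof.
  intros H x [A [HA ->]]. exists A. split; [|reflexivity].
  intros a Ha. destruct (HA a Ha) as [S [HS HSa]]. exists S; auto.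
Qed.

Lemma subset_joinSl (F : (L -> Prop) -> Prop) T : F T -> subset T (joinSl F).
Proof.
  intros HT x Hx. exists (fun y => y = x). split.
  - intros a ->. exists T; auto.
  - symmetry; apply inf_singleton.
Qed.

Variable X : (L -> Prop) -> Prop.

Lemma int_X_mono (S S' : L -> Prop) :
  subset S S' -> subset (int_X X S) (int_X X S').
Proof.
  intro H. apply joinSl_mono. intros T [HT HTS]. exact (conj HT (subset_trans HTS H)).
Qed.

Lemma joins_of_int_X (S : L -> Prop) : joins_of X (int_X X S).
Proof. exists (fun T => X T /\ subset T S). split; [intros T []; auto | reflexivity]. Qed.

Lemma int_X_subset_fit (S : L -> Prop) : subset (int_X X S) (fit S).
Proof.
  intros x [A [HA ->]]. apply fit_inf. intros a Ha.
  destruct (HA a Ha) as [T [[_ HTS] HTa]]. exact (subset_fit (HTS a HTa)).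
Qed.

Lemma int_X_S_o (S : L -> Prop) : S_o S -> subset (int_X X S) S.
Proof. intro HS. exact (subset_trans (int_X_subset_fit (S := S)) (fit_S_o HS)). Qed.

Lemma joins_of_subset_int_X (S : L -> Prop) : joins_of X S -> subset S (int_X X S).
Proof.
  intros [F [HF ->]]. apply joinSl_mono. intros T HT.
  exact (conj (HF T HT) (subset_joinSl HT)).
Qed.

Lemma fit_int_X_fit (S : L -> Prop) : joins_of X S -> fit (int_X X (fit S)) = fit S.
Proof.
  intro HS. apply subset_antisym.
  - apply (subset_trans (V := fit (fit S))); [|apply fit_idem].
    apply fit_mono, (subset_trans (int_X_subset_fit (S := fit S))), fit_idem.
  - apply fit_mono, (subset_trans (joins_of_subset_int_X HS)), int_X_mono, subset_fit.
Qed.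

Lemma int_X_fit_int_X (S : L -> Prop) : S_o S -> int_X X (fit (int_X X S)) = int_X X S.
Proof.
  intro HS. apply subset_antisym.
  - apply int_X_mono, (subset_trans (fit_mono (int_X_S_o HS))), fit_S_o, HS.
  - apply (subset_trans (joins_of_subset_int_X (joins_of_int_X S))), int_X_mono, subset_fit.
Qed.

Lemma fit_int_iso_joins_of : @fit_int_iso L (joins_of X) X.
Proof.
  repeat split.
  - intros U [S [_ ->]]. exists (fit S). split; [apply S_o_fit | reflexivity].
  - intros U [S [_ ->]]. exists (int_X X S). split; [apply joins_of_int_X | reflexivity].
  - intros U [S [HS ->]]. apply fit_int_X_fit, HS.
  - intros U [S [HS ->]]. apply int_X_fit_int_X, HS.
  - intros U V _ _. apply int_X_mono.
  - intros U V _ _. apply fit_mono.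
Qed.

End FitInt.

Lemma int_X_S_op (L : frame) (S : L -> Prop) : int_X (@S_op L) S = sp S.
Proof.
  unfold int_X, sp. f_equal. apply functional_extensionality; intro T.
  apply propositional_extensionality; split.
  - intros [[p [Hp ->]] HS]. exists p; auto.
  - intros [p [Hp [HS ->]]]. split; [exists p; auto | exact HS].
Qed.

Theorem mainTheorem16 (L : frame) :
  @fit_int_iso L (@S_b L) (@S_lc L) /\
  @fit_int_iso L (@S_c L) (@c_L L) /\
  @fit_int_iso L (@S_k L) (@S_co L) /\
  @fit_int_iso L (@S_sp L) (@S_op L) /\
  (fun U : L -> Prop => exists S, @S_o L S /\ U = @int_X L (@S_op L) S) =
  (fun U : L -> Prop => exists S, @S_o L S /\ U = @sp L S).
Proof.
  split; [exact (fit_int_iso_joins_of (@S_lc L))|].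
  split; [exact (fit_int_iso_joins_of (@c_L L))|].
  split; [exact (fit_int_iso_joins_of (@S_co L))|].
  split; [exact (fit_int_iso_joins_of (@S_op L))|].
  apply functional_extensionality; intro U.
  apply propositional_extensionality.
  split; intros [S [HS ->]]; exists S; rewrite int_X_S_op; auto.
Qed.
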